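(* Let $G$ and $H$ be graphs each having at least one edge. Then the lexicographic product $G\circ H$ is well-bicovered if and only if (i) $G$ is well-covered; and (ii) $H$ is both well-covered and well-bicovered, and $b(H)=2\alpha(H)$.
   Context: All graphs are finite and simple; ''subgraph'' means induced subgraph. $b(G)$ denotes the maximum order of an induced bipartite subgraph of $G$. A graph is well-bicovered if every vertex-inclusion-maximal induced bipartite subgraph has the same order. A graph is well-covered if every maximal independent set has the same cardinality, the independence number $\alpha$. The lexicographic product $G\circ H$ has vertex set $V(G)\times V(H)$, with $(u,v)$ adjacent to $(x,y)$ iff $ux\in E(G)$, or $u=x$ and $vy\in E(H)$. *)

From mathcomp Require Import all_boot.
Set Implicit Arguments. Unset Strict Implicit. Unset Printing Implicit Defensive.

Record graph := Graph {
  vert : finType;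
  adj : rel vert;
  adj_sym : symmetric adj;
  adj_irr : irreflexive adj }.

Section G.
Variable G : graph.
Local Notation V := (vert G).
Local Notation e := (@adj G).

Definition has_edge : Prop := exists x y : V, e x y.

Definition independent (A : {set V}) : bool :=
  [forall x in A, forall y in A, ~~ e x y].

Definition maximal_independent (A : {set V}) : bool :=
  independent A && [forall x, (x \notin A) ==> ~~ independent (x |: A)].

Definition alpha : nat := \max_(A : {set V} | independent A) #|A|.

Definition well_covered : Prop :=
  forall A B : {set V}, maximal_independent A -> maximal_independent B ->
    #|A| = #|B|.

(* A vertex set induces a bipartite subgraph iff it is the union of two
   independent sets. *)
Definition bipartite_set (A : {set V}) : bool :=
  [exists X : {set V}, (X \subset A) && independent X && independent (A :\: X)].

Definition maximal_bipartite (A : {set V}) : bool :=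
  bipartite_set A && [forall x, (x \notin A) ==> ~~ bipartite_set (x |: A)].

Definition bip_num : nat := \max_(A : {set V} | bipartite_set A) #|A|.

Definition well_bicovered : Prop :=
  forall A B : {set V}, maximal_bipartite A -> maximal_bipartite B ->
    #|A| = #|B|.
End G.

Section Lex.
Variables G H : graph.
Definition lex_adj : rel (vert G * vert H) :=
  fun p q => adj p.1 q.1 || ((p.1 == q.1) && adj p.2 q.2).

Lemma lex_adj_sym : symmetric lex_adj.
Proof.
move=> [u v] [x y]; rewrite /lex_adj /= (adj_sym u x) (adj_sym v y).
by rewrite (eq_sym u x).
Qed.

Lemma lex_adj_irr : irreflexive lex_adj.
Proof. by move=> [u v]; rewrite /lex_adj /= !adj_irr eqxx. Qed.

Definition lex_prod : graph :=
  @Graph (vert G * vert H)%type lex_adj lex_adj_sym lex_adj_irr.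
End Lex.

From mathcomp Require Import all_boot zify.
Set Implicit Arguments. Unset Strict Implicit. Unset Printing Implicit Defensive.

(* Let X, Y be the two sides of a maximal induced bipartite set S of G o H, and
   A, B their projections to G.  Using an edge of H, A and B are maximal
   independent in G; the fiber of S over u is a maximal independent set of H if
   u lies in exactly one of A, B, a maximal induced bipartite set of H if u lies
   in both, and empty otherwise.  Counting fibers,
     |S| = alpha(H) (|A \ B| + |B \ A|) + b(H) |A /\ B|,
   which is 2 alpha(G) alpha(H) under conditions (i) and (ii).
   Conversely, A' x M is maximal bipartite whenever A' is maximal independent in
   G and M maximal bipartite in H; this gives (i) and well-bicoveredness of H.
   Growing S from an edge of G yields some u in A \ B; replacing the fiber over
   u by any maximal independent set of H keeps S maximal, so H is well-covered,
   and comparing |S| with |A x M| = |B x M| forces b(H) = 2 alpha(H). *)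

Section MaximalSets.
Variables (T : finType) (P : pred {set T}).

Lemma maximalP (A : {set T}) :
  reflect (P A /\ forall x, P (x |: A) -> x \in A)
          (P A && [forall x, (x \notin A) ==> ~~ P (x |: A)]).
Proof.
apply: (iffP andP) => -[PA maxA]; split=> //.
  by move=> x; apply: contraTT => xA; exact: (implyP (forallP maxA x)).
by apply/forallP => x; apply/implyP; apply: contra (maxA x).
Qed.

Lemma exists_maximal_superset (A0 : {set T}) : P A0 ->
  exists2 A : {set T}, A0 \subset A & P A && [forall x, (x \notin A) ==> ~~ P (x |: A)].
Proof.
case/maxset_exists=> A /maxsetP[PA maxA] sA0A; exists A => //.
apply/maximalP; split=> // x /maxA/(_ (subsetUr _ _)) <-; exact: setU11.
Qed.

Lemma exists_maximal_max_card : P set0 ->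
  exists2 A : {set T}, P A && [forall x, (x \notin A) ==> ~~ P (x |: A)]
           & #|A| = \max_(B | P B) #|B|.
Proof.
move=> P0; rewrite (bigmax_eq_arg set0) //.
case: arg_maxnP => // A PA maxA; exists A => //.
apply/maximalP; split=> // x /maxA.
by apply: contraTT => xA; rewrite cardsU1 xA -ltnNge.
Qed.

End MaximalSets.

Lemma sum_nat_mem (T : finType) (A : {set T}) : \sum_x (x \in A : nat) = #|A|.
Proof.
by rewrite -sum1_card [RHS]big_mkcond; apply: eq_bigr => x _; case: (x \in A).
Qed.

Section Graph.
Variable G : graph.
Local Notation V := (vert G).
Implicit Types (A B S X : {set V}) (x y : V).

Lemma indepP A : reflect {in A &, forall x y, ~~ adj x y} (independent A).
Proof.
apply: (iffP forall_inP) => [iA x y xA yA | iA x xA].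
  by move/forall_inP: (iA x xA); apply.
by apply/forall_inP => y; exact: iA.
Qed.

Lemma indepPn A :
  reflect (exists x y, [/\ x \in A, y \in A & adj x y]) (~~ independent A).
Proof.
apply: (iffP forall_inPn) => [[x xA /forall_inPn[y yA /negPn xy]] | [x [y [xA yA xy]]]].
  by exists x, y.
by exists x => //; apply/forall_inPn; exists y; rewrite ?xy.
Qed.

Lemma independentS A B : B \subset A -> independent A -> independent B.
Proof.
by move=> /subsetP sBA /indepP iA; apply/indepP => x y /sBA xA /sBA; exact: iA.
Qed.

Lemma independent0 : independent (set0 : {set V}).
Proof. by apply/indepP => x; rewrite inE. Qed.

Lemma independent1 x : independent [set x].
Proof. by apply/indepP => y z /set1P-> /set1P->; rewrite adj_irr. Qed.

Definition bipartition S X := [&& X \subset S, independent X & independent (S :\: X)].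

Lemma bipartiteP S : reflect (exists X, bipartition S X) (bipartite_set S).
Proof.
by apply: (iffP existsP) => -[X partX]; exists X; rewrite /bipartition andbA in partX *.
Qed.

Lemma bipartitionC S X : bipartition S X -> bipartition S (S :\: X).
Proof.
case/and3P=> sXS iX iSX.
by rewrite /bipartition subsetDl iSX setDDr setDv set0U (setIidPr sXS).
Qed.

Lemma bipartition_adj S X : bipartition S X ->
  {in S &, forall x y, adj x y -> (x \in X) = (y \notin X)}.
Proof.
case/and3P=> _ /indepP iX /indepP iSX x y xS yS xy.
case xX: (x \in X); case yX: (y \in X) => //=.
  by move: (iX x y xX yX); rewrite xy.
by move: (iSX x y); rewrite !inE xX yX xS yS xy => /(_ isT isT).
Qed.

Lemma bipartition_avoid S x : bipartite_set S ->
  exists2 X, bipartition S X & x \notin X.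
Proof.
case/bipartiteP=> X partX; case xX: (x \in X); last by exists X; rewrite ?xX.
by exists (S :\: X); [exact: bipartitionC | rewrite inE xX].
Qed.

Lemma bipartite_triangle S x y z : bipartite_set S ->
  x \in S -> y \in S -> z \in S -> adj x y -> adj y z -> adj x z -> False.
Proof.
case/bipartiteP=> X partX xS yS zS xy yz xz.
move: (bipartition_adj partX xS yS xy) (bipartition_adj partX yS zS yz).
by move: (bipartition_adj partX xS zS xz); do 3!case: (_ \in X).
Qed.

Lemma bipartite_add S X x : bipartition S X ->
  (forall y, y \in X -> ~~ adj x y) -> bipartite_set (x |: S).
Proof.
case/and3P=> sXS iX iSX xX; apply/bipartiteP; exists (x |: X).
rewrite /bipartition setUS //=; apply/andP; split.
  apply/indepP => y z /setU1P[-> | yX] /setU1P[-> | zX]; rewrite ?adj_irr ?xX //.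
    by rewrite adj_sym xX.
  exact: (indepP _ iX).
by apply: independentS iSX; rewrite setDUl setDUr setDv set0I set0U setDS // subsetUr.
Qed.

Lemma bipartite2 x y : bipartite_set [set x; y].
Proof.
apply: (@bipartite_add [set y] set0) => [|z]; last by rewrite inE.
by rewrite /bipartition sub0set independent0 setD0 independent1.
Qed.

Lemma maximal_independentP A :
  reflect (independent A /\ forall x, independent (x |: A) -> x \in A)
          (maximal_independent A).
Proof. exact: maximalP. Qed.

Lemma maximal_bipartiteP S :
  reflect (bipartite_set S /\ forall x, bipartite_set (x |: S) -> x \in S)
          (maximal_bipartite S).
Proof. exact: maximalP. Qed.

Lemma maximal_bipartite_add S x :
  maximal_bipartite S -> bipartite_set (x |: S) -> x \in S.
Proof. by case/maximal_bipartiteP=> _; apply. Qed.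

Lemma maximal_independent_dominating A x : maximal_independent A ->
  x \notin A -> exists2 y, y \in A & adj x y.
Proof.
case/maximal_independentP=> /indepP iA maxA xA.
have /indepPn[y [z [/setU1P[-> | yA] /setU1P[-> | zA] yz]]] := contraNN (maxA x) xA.
- by rewrite adj_irr in yz.
- by exists z.
- by exists y; rewrite // adj_sym.
- by move: (iA y z yA zA); rewrite yz.
Qed.

Lemma maximal_independent_neq0 A x : maximal_independent A -> A != set0.
Proof.
case/maximal_independentP=> _ maxA; apply/eqP => A0.
by move: (maxA x); rewrite A0 setU0 in_set0 independent1 => /(_ isT).
Qed.

Lemma maximal_bipartite_edge S : has_edge G -> maximal_bipartite S ->
  exists x y, [/\ x \in S, y \in S & adj x y].
Proof.
case=> x0 [y0 xy0] /maximal_bipartiteP[_ maxS]; apply/indepPn/negP => iS.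
have inS x : x \in S.
  apply: maxS; apply/bipartiteP; exists S.
  rewrite /bipartition subsetUr iS; apply: independentS (independent1 x).
  by rewrite setDUl setDv setU0 subsetDl.
by move: (indepP _ iS x0 y0 (inS x0) (inS y0)); rewrite xy0.
Qed.

Lemma alpha_attained : exists2 A : {set V}, maximal_independent A & #|A| = alpha G.
Proof. exact: exists_maximal_max_card independent0. Qed.

Lemma bip_num_attained : exists2 S : {set V}, maximal_bipartite S & #|S| = bip_num G.
Proof.
by apply: exists_maximal_max_card; apply/bipartiteP; exists set0;
  rewrite /bipartition sub0set setD0 independent0.
Qed.

Lemma well_covered_card A :
  well_covered G -> maximal_independent A -> #|A| = alpha G.
Proof. by move=> wcG maxA; case: alpha_attained => B maxB <-; exact: wcG. Qed.

Lemma well_bicovered_card S :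
  well_bicovered G -> maximal_bipartite S -> #|S| = bip_num G.
Proof. by move=> wbG maxS; case: bip_num_attained => B maxB <-; exact: wbG. Qed.

End Graph.

Section LexProduct.
Variables G H : graph.
Local Notation K := (lex_prod G H).
Local Notation VK := (vert K).
Implicit Types (S T X Z : {set VK}) (u w : vert G) (v : vert H) (F Y : {set vert H}).

Lemma lex_adjE (p q : VK) : adj p q = adj p.1 q.1 || (p.1 == q.1) && adj p.2 q.2.
Proof. by []. Qed.

Definition fiber S u : {set vert H} := [set v | ((u, v) : VK) \in S].

Definition proj S : {set vert G} := [set u | fiber S u != set0].

Definition set_fiber S u F : {set VK} :=
  [set p : VK | if p.1 == u then p.2 \in F else p \in S].

Lemma fiberE S u v : (v \in fiber S u) = (((u, v) : VK) \in S).
Proof. by rewrite inE. Qed.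

Lemma projP S u : reflect (exists v, ((u, v) : VK) \in S) (u \in proj S).
Proof.
by rewrite inE; apply: (iffP (set0Pn _)) => -[v]; rewrite ?fiberE => uv;
  exists v; rewrite ?fiberE.
Qed.

Lemma in_set_fiber S u F (p : VK) :
  (p \in set_fiber S u F) = (if p.1 == u then p.2 \in F else p \in S).
Proof. by rewrite inE. Qed.

Lemma fiber_set_fiber S u F w :
  fiber (set_fiber S u F) w = if w == u then F else fiber S w.
Proof.
by apply/setP => v; rewrite fiberE in_set_fiber /=; case: ifP; rewrite ?fiberE.
Qed.

Lemma set_fiber_fiberU1 S u v : set_fiber S u (v |: fiber S u) = ((u, v) : VK) |: S.
Proof.
apply/setP => -[w y]; rewrite in_set_fiber !inE /= xpair_eqE.
by case: eqVneq => [->|] //=; rewrite fiberE.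
Qed.

Lemma fiberD S X u : fiber (S :\: X) u = fiber S u :\: fiber X u.
Proof. by apply/setP => v; rewrite !inE. Qed.

Lemma fiber_independent X u : independent X -> independent (fiber X u).
Proof.
move/indepP=> iX; apply/indepP => v1 v2; rewrite !fiberE => uv1 uv2.
by apply: contraNN (iX _ _ uv1 uv2); rewrite lex_adjE /= eqxx => ->; rewrite orbT.
Qed.

Lemma proj_independent X : independent X -> independent (proj X).
Proof.
move/indepP=> iX; apply/indepP => u1 u2 /projP[v1 uv1] /projP[v2 uv2].
by apply: contraNN (iX _ _ uv1 uv2); rewrite lex_adjE /= => ->.
Qed.

Lemma fiber_bipartite S u : bipartite_set S -> bipartite_set (fiber S u).
Proof.
case/bipartiteP=> X /and3P[sXS iX iSX]; apply/bipartiteP; exists (fiber X u).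
rewrite /bipartition -fiberD (fiber_independent _ iX) (fiber_independent _ iSX) !andbT.
by apply/subsetP => v; rewrite !fiberE; apply: (subsetP sXS).
Qed.

Lemma setX_independent (A : {set vert G}) Y :
  independent A -> independent Y -> independent (setX A Y : {set VK}).
Proof.
move=> /indepP iA /indepP iY; apply/indepP => -[u1 v1] [u2 v2].
rewrite !in_setX => /andP[uA1 vY1] /andP[uA2 vY2].
by rewrite lex_adjE /= (negbTE (iA _ _ uA1 uA2)) (negbTE (iY _ _ vY1 vY2)) andbF.
Qed.

Lemma set_fiber_independent Z u F : independent Z -> u \in proj Z ->
  independent F -> independent (set_fiber Z u F).
Proof.
move=> iZ uZ /indepP iF; have /indepP ipZ := proj_independent iZ.
have uw p : p \in Z -> p.1 != u -> ~~ adj u p.1.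
  by case: p => w y wyZ _; apply: ipZ => //; apply/projP; exists y.
apply/indepP => -[w1 y1] [w2 y2]; rewrite !in_set_fiber lex_adjE /=.
case: eqVneq => [-> | wu1]; case: eqVneq => [-> | wu2] p1 p2.
- by rewrite adj_irr iF.
- by rewrite (negbTE (uw _ p2 wu2)).
- by rewrite adj_sym (negbTE (uw _ p1 wu1)) (negbTE wu1).
- exact: (indepP _ iZ (w1, y1) (w2, y2)).
Qed.

Lemma setD_set_fiber T Z u F Y :
  set_fiber T u F :\: set_fiber Z u Y = set_fiber (T :\: Z) u (F :\: Y).
Proof. by apply/setP => p; rewrite !inE; case: ifP. Qed.

Lemma bipartition_set_fiber T Z u F Y :
  bipartition T Z -> bipartition F Y -> u \in proj Z -> u \in proj (T :\: Z) ->
  bipartition (set_fiber T u F) (set_fiber Z u Y).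
Proof.
move=> /and3P[sZT iZ iTZ] /and3P[sYF iY iFY] uZ uTZ.
rewrite /bipartition setD_set_fiber !set_fiber_independent // !andbT.
by apply/subsetP => p; rewrite !in_set_fiber; case: ifP => _; apply/subsetP.
Qed.

Lemma bipartition_set_fiber1 T Z u F : bipartition T Z -> u \in proj Z ->
  independent F -> bipartition (set_fiber T u F) (set_fiber Z u F).
Proof.
move=> /and3P[sZT iZ iTZ] uZ iF.
rewrite /bipartition setD_set_fiber setDv set_fiber_independent //=.
apply/andP; split.
  by apply/subsetP => p; rewrite !in_set_fiber; case: ifP => // _; apply/subsetP.
apply: independentS iTZ; apply/subsetP => p.
by rewrite in_set_fiber inE; case: ifP.
Qed.

Lemma bipartite_set_fiber_neighbor T u w z F :
  bipartite_set T -> ((w, z) : VK) \in T -> adj u w -> fiber T u != set0 ->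
  independent F -> bipartite_set (set_fiber T u F).
Proof.
move=> bT wzT uw /set0Pn[y]; rewrite fiberE => uyT iF.
(* The side Z avoiding (w, z) meets the fiber over u, so u is adjacent to no
   vertex of proj Z and Z can take any independent fiber over u. *)
have [Z partZ wzZ] := bipartition_avoid ((w, z) : VK) bT.
have uyZ : ((u, y) : VK) \in Z.
  by rewrite (bipartition_adj partZ uyT wzT) // lex_adjE uw.
apply/bipartiteP; exists (set_fiber Z u F).
by apply: bipartition_set_fiber1 iF => //; apply/projP; exists y.
Qed.

Lemma card_fibers S : #|S| = \sum_u #|fiber S u|.
Proof.
rewrite -sum1_card (eq_bigr (fun u => \sum_(v in fiber S u) 1)); last first.
  by move=> u _; rewrite sum1_card.
by rewrite pair_big_dep /=; apply: eq_bigl => -[u v]; rewrite fiberE.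
Qed.

Lemma card_set_fiber S u F : #|set_fiber S u F| + #|fiber S u| = #|S| + #|F|.
Proof.
rewrite !card_fibers (bigD1 u) //= [in RHS](bigD1 u) //= fiber_set_fiber eqxx.
rewrite (eq_bigr (fun w => #|fiber S w|)) => [|w /negbTE wu]; last first.
  by rewrite fiber_set_fiber wu.
lia.
Qed.

End LexProduct.

Section MaximalBipartiteLex.
Variables G H : graph.
Hypothesis edgeH : has_edge H.
Local Notation K := (lex_prod G H).
Local Notation VK := (vert K).
Implicit Types (X : {set VK}) (u : vert G).

Lemma setX_maximal_bipartite (A : {set vert G}) (M : {set vert H}) :
  maximal_independent A -> maximal_bipartite M ->
  maximal_bipartite (setX A M : {set VK}).
Proof.
move=> maxA maxM; have [y1 [y2 [y1M y2M y12]]] := maximal_bipartite_edge edgeH maxM.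
have [iA _] := maximal_independentP _ maxA.
have [/bipartiteP[Y /and3P[sYM iY iMY]] _] := maximal_bipartiteP _ maxM.
apply/maximal_bipartiteP; split.
  apply/bipartiteP; exists (setX A Y).
  rewrite /bipartition setXS ?setX_independent //=.
  apply: independentS (setX_independent iA iMY).
  by apply/subsetP => -[u v]; rewrite !inE; case: (u \in A).
move=> [x v] bT; rewrite in_setX; case: (boolP (x \in A)) => [xA | xA] /=.
  apply: (maximal_bipartite_add maxM).
  suff <- : fiber (((x, v) : VK) |: setX A M) x = v |: M by exact: fiber_bipartite.
  by apply/setP => y; rewrite fiberE !inE xpair_eqE eqxx xA.
have [a aA xa] := maximal_independent_dominating maxA xA.
have inT y : y \in M -> ((a, y) : VK) \in ((x, v) : VK) |: setX A M.
  by move=> yM; rewrite setU1r // in_setX aA.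
by case: (bipartite_triangle bT (setU11 _ _) (inT _ y1M) (inT _ y2M));
  rewrite lex_adjE /= ?xa ?eqxx ?y12 ?orbT.
Qed.

Variable S : {set VK}.
Hypothesis maxS : maximal_bipartite S.

Lemma proj_maximal_independent X : bipartition S X ->
  maximal_independent (proj X).
Proof.
move=> partX; have /and3P[sXS iX iSX] := partX.
apply/maximal_independentP; split; first exact: proj_independent.
move=> x ixX; apply: contraT => xX.
have xvS v : ((x, v) : VK) \in S :\: X.
  rewrite inE; apply/andP; split.
    by apply: contra xX => xvX; apply/projP; exists v.
  apply: (maximal_bipartite_add maxS); apply: (bipartite_add partX) => -[w y] wyX.
  have wX : w \in proj X by apply/projP; exists y.
  have xw : x != w by apply: contraNneq xX => ->.
  rewrite lex_adjE /= (negbTE xw) andFb orbF.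
  by apply: (indepP _ ixX); rewrite ?setU11 ?setU1r.
have [y1 [y2 y12]] := edgeH.
by move: (indepP _ iSX _ _ (xvS y1) (xvS y2)); rewrite lex_adjE /= eqxx y12 orbT.
Qed.

Lemma fiber_maximal_independent X u : bipartition S X ->
  u \in proj X -> u \notin proj (S :\: X) -> maximal_independent (fiber S u).
Proof.
move=> partX uX uSX; have /and3P[sXS iX _] := partX.
have fiberSX : fiber S u = fiber X u.
  apply/setP => v; rewrite !fiberE; apply/idP/idP => [uvS | /(subsetP sXS)//].
  by apply: contraNT uSX => uvX; apply/projP; exists v; rewrite inE uvX.
apply/maximal_independentP; split; first by rewrite fiberSX fiber_independent.
move=> v iv; rewrite fiberE; apply: (maximal_bipartite_add maxS).
rewrite -set_fiber_fiberU1; apply/bipartiteP; exists (set_fiber X u (v |: fiber S u)).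
exact: bipartition_set_fiber1.
Qed.

Lemma fiber_maximal_bipartite X u : bipartition S X ->
  u \in proj X -> u \in proj (S :\: X) -> maximal_bipartite (fiber S u).
Proof.
move=> partX uX uSX; have [bS _] := maximal_bipartiteP _ maxS.
apply/maximal_bipartiteP; split; first exact: fiber_bipartite.
move=> v /bipartiteP[Y partY]; rewrite fiberE; apply: (maximal_bipartite_add maxS).
rewrite -set_fiber_fiberU1; apply/bipartiteP; exists (set_fiber X u Y).
exact: bipartition_set_fiber.
Qed.

Lemma maximal_bipartite_set_fiber X u J : bipartition S X ->
  u \in proj X -> u \notin proj (S :\: X) -> maximal_independent J ->
  maximal_bipartite (set_fiber S u J).
Proof.
move=> partX uX uSX maxJ.
have [w /projP[z wzSX] uw] := maximal_independent_dominating
  (proj_maximal_independent (bipartitionC partX)) uSX.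
have wu : w != u by apply: contraTneq uw => ->; rewrite adj_irr.
have [[iJ _] [y0 _]] := (maximal_independentP _ maxJ, edgeH).
have [j0 j0J] := set0Pn _ (maximal_independent_neq0 y0 maxJ).
have [iSu _] := maximal_independentP _ (fiber_maximal_independent partX uX uSX).
apply/maximal_bipartiteP; split.
  by apply/bipartiteP; exists (set_fiber X u J); exact: bipartition_set_fiber1.
move=> [x v]; set T := _ |: _ => bT; rewrite in_set_fiber /=.
have wzT : ((w, z) : VK) \in T.
  by rewrite setU1r // in_set_fiber /= (negbTE wu); move: wzSX; rewrite inE => /andP[].
have uJT j : j \in J -> ((u, j) : VK) \in T.
  by move=> jJ; rewrite setU1r // in_set_fiber /= eqxx.
case: eqVneq => [xu | xu].
  subst x; apply: contraT => vJ.
  have [j jJ vj] := maximal_independent_dominating maxJ vJ.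
  by case: (bipartite_triangle bT (setU11 _ _) (uJT j jJ) wzT);
    rewrite lex_adjE /= ?eqxx ?vj ?uw ?orbT.
have bTS : bipartite_set (set_fiber T u (fiber S u)).
  apply: (bipartite_set_fiber_neighbor bT wzT uw _ iSu).
  by apply/set0Pn; exists j0; rewrite fiberE uJT.
apply: (maximal_bipartite_add maxS); congr bipartite_set: bTS.
apply/setP => -[a b].
rewrite in_set_fiber /= fiberE /T !in_setU1 in_set_fiber /= xpair_eqE.
by case: eqVneq => [->|] //=; rewrite eq_sym (negbTE xu).
Qed.

Lemma fiber_eq0 X u : X \subset S ->
  u \notin proj X -> u \notin proj (S :\: X) -> fiber S u = set0.
Proof.
move=> sXS uX uSX; apply/setP => v; rewrite fiberE inE.
case: (boolP (((u, v) : VK) \in X)) => uvX.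
  by case/negP: uX; apply/projP; exists v.
by apply: contraNF uSX => uvS; apply/projP; exists v; rewrite inE uvX.
Qed.

Lemma card_maximal_bipartite X : bipartition S X ->
  well_covered H -> well_bicovered H ->
  #|S| = alpha H * (#|proj X :\: proj (S :\: X)| + #|proj (S :\: X) :\: proj X|)
         + bip_num H * #|proj X :&: proj (S :\: X)|.
Proof.
move=> partX wcH wbH; set A := proj X; set B := proj (S :\: X).
have partSX := bipartitionC partX; have /and3P[sXS _ _] := partX.
have SSX : S :\: (S :\: X) = X by rewrite setDDr setDv set0U (setIidPr sXS).
have card_fiber u : #|fiber S u| =
    alpha H * (u \in A :\: B) + alpha H * (u \in B :\: A) + bip_num H * (u \in A :&: B).
  rewrite in_setD in_setD in_setI.
  case uA: (u \in A); case uB: (u \in B); rewrite /= ?muln0 ?muln1 ?addn0 ?add0n.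
  - exact: (well_bicovered_card wbH (fiber_maximal_bipartite partX uA uB)).
  - exact: (well_covered_card wcH (fiber_maximal_independent partX uA (negbT uB))).
  - apply: (well_covered_card wcH); apply: (fiber_maximal_independent partSX uB).
    by rewrite SSX uA.
  - by rewrite (fiber_eq0 sXS (negbT uA) (negbT uB)) cards0.
rewrite card_fibers (eq_bigr _ (fun u _ => card_fiber u)) !big_split /=.
by rewrite -!big_distrr /= !sum_nat_mem mulnDr.
Qed.

End MaximalBipartiteLex.

Section LexWellBicovered.
Variables G H : graph.
Local Notation K := (lex_prod G H).
Local Notation VK := (vert K).

Lemma exists_maximal_bipartite_one_sided (h : vert H) : has_edge G ->
  exists (S X : {set VK}) (u : vert G), [/\ maximal_bipartite S, bipartition S X,
    u \in proj X & u \notin proj (S :\: X)].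
Proof.
case=> a [b ab].
have [S sS maxS] := exists_maximal_superset (bipartite2 ((a, h) : VK) (b, h)).
have [bS _] := maximal_bipartiteP _ maxS.
have [ahS bhS] : ((a, h) : VK) \in S /\ ((b, h) : VK) \in S.
  by split; apply: (subsetP sS); rewrite !inE eqxx ?orbT.
have [X partX bhX] := bipartition_avoid ((b, h) : VK) bS.
have ahX : ((a, h) : VK) \in X.
  by rewrite (bipartition_adj partX ahS bhS) // lex_adjE ab.
exists S, X, a; split=> //; first by apply/projP; exists h.
apply/projP => -[y ayX]; have /and3P[_ _ /indepP iSX] := partX.
have bhSX : ((b, h) : VK) \in S :\: X by rewrite inE bhX.
by move: (iSX _ _ ayX bhSX); rewrite lex_adjE ab.
Qed.

Lemma well_bicovered_lex : has_edge H -> well_covered G -> well_covered H ->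
  well_bicovered H -> bip_num H = 2 * alpha H -> well_bicovered K.
Proof.
move=> edgeH wcG wcH wbH bipH.
suff cardS (S : {set VK}) : maximal_bipartite S -> #|S| = 2 * alpha G * alpha H.
  by move=> S1 S2 /cardS -> /cardS ->.
move=> maxS; have [/bipartiteP[X partX] _] := maximal_bipartiteP _ maxS.
rewrite (card_maximal_bipartite maxS partX wcH wbH).
have cardA := well_covered_card wcG (proj_maximal_independent edgeH maxS partX).
have cardB := well_covered_card wcG
  (proj_maximal_independent edgeH maxS (bipartitionC partX)).
have := cardsID (proj (S :\: X)) (proj X); have := cardsID (proj X) (proj (S :\: X)).
rewrite setIC bipH cardA cardB; nia.
Qed.

Lemma well_covered_of_well_bicovered_lex_l :
  has_edge H -> well_bicovered K -> well_covered G.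
Proof.
move=> edgeH wbK A1 A2 maxA1 maxA2.
have [M maxM _] := bip_num_attained H.
have [y [_ [yM _ _]]] := maximal_bipartite_edge edgeH maxM.
have := wbK _ _ (setX_maximal_bipartite edgeH maxA1 maxM)
                (setX_maximal_bipartite edgeH maxA2 maxM).
rewrite !cardsX => /eqP; rewrite eqn_pmul2r ?card_gt0 => [/eqP //|].
by apply/set0Pn; exists y.
Qed.

Lemma well_bicovered_of_well_bicovered_lex_r (u : vert G) :
  has_edge H -> well_bicovered K -> well_bicovered H.
Proof.
move=> edgeH wbK M1 M2 maxM1 maxM2.
have [A maxA _] := alpha_attained G.
have := wbK _ _ (setX_maximal_bipartite edgeH maxA maxM1)
                (setX_maximal_bipartite edgeH maxA maxM2).
rewrite !cardsX => /eqP; rewrite eqn_pmul2l => [/eqP //|].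
by rewrite card_gt0 (maximal_independent_neq0 u).
Qed.

Lemma well_covered_of_well_bicovered_lex_r :
  has_edge G -> has_edge H -> well_bicovered K -> well_covered H.
Proof.
move=> edgeG edgeH wbK; have [h _] := edgeH.
have [S [X [u [maxS partX uX uSX]]]] := exists_maximal_bipartite_one_sided h edgeG.
suff cardJ (J : {set vert H}) : maximal_independent J -> #|J| = #|fiber S u|.
  by move=> J1 J2 /cardJ -> /cardJ ->.
move=> maxJ; have := card_set_fiber S u J.
have maxSJ := maximal_bipartite_set_fiber edgeH maxS partX uX uSX maxJ.
by rewrite (wbK _ _ maxSJ maxS) => /addnI.
Qed.

Lemma bip_num_of_well_bicovered_lex :
  has_edge G -> has_edge H -> well_bicovered K -> bip_num H = 2 * alpha H.
Proof.
move=> edgeG edgeH wbK; have [[u _] [h _]] := (edgeG, edgeH).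
have wcH := well_covered_of_well_bicovered_lex_r edgeG edgeH wbK.
have wbH := well_bicovered_of_well_bicovered_lex_r u edgeH wbK.
have [S [X [a [maxS partX aX aSX]]]] := exists_maximal_bipartite_one_sided h edgeG.
have [M maxM cardM] := bip_num_attained H.
have cardS Y : bipartition S Y -> #|S| = #|proj Y| * bip_num H.
  move=> partY; rewrite -cardM -cardsX; apply: (wbK _ _ maxS).
  exact: setX_maximal_bipartite (proj_maximal_independent edgeH maxS partY) maxM.
have := card_maximal_bipartite maxS partX wcH wbH.
have := cardS _ partX; have := cardS _ (bipartitionC partX).
set A := proj X; set B := proj (S :\: X).
have : 0 < #|A :\: B| by rewrite card_gt0; apply/set0Pn; exists a; rewrite inE aX aSX.
have := cardsID B A; have := cardsID A B; rewrite setIC; nia.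
Qed.

End LexWellBicovered.

Theorem mainTheorem4 (G H : graph) :
  has_edge G -> has_edge H ->
  (well_bicovered (lex_prod G H) <->
   (well_covered G /\
    (well_covered H /\ well_bicovered H /\ bip_num H = 2 * alpha H))).
Proof.
move=> edgeG edgeH; split=> [wbK | [wcG [wcH [wbH bipH]]]]; last first.
  exact: well_bicovered_lex.
have [u _] := edgeG.
split; first exact: (well_covered_of_well_bicovered_lex_l edgeH wbK).
split; first exact: (well_covered_of_well_bicovered_lex_r edgeG edgeH wbK).
split; first exact: (well_bicovered_of_well_bicovered_lex_r u edgeH wbK).
exact: (bip_num_of_well_bicovered_lex edgeG edgeH wbK).
Qed.
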